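(* Under the setting of the context, assume $P(z)$ is primitive, $\mathbf{x}_0\neq 0$, and $h_0(z)\neq 0$. Then there exist $w_{j,l-1}\in\mathbb{F}_2$ ($0\le j\le k(v)$, $1\le l\le v$), not all zero, with $\sum_{l=1}^{v}\sum_{j=0}^{k(v)} w_{j,l-1}y_{i+j,l-1}=0$ for all $i\ge0$; and for every integer $k$ with $0\le k<k(v)$, the only coefficients $w_{j,l-1}\in\mathbb{F}_2$ ($0\le j\le k$, $1\le l\le v$) satisfying $\sum_{l=1}^{v}\sum_{j=0}^{k} w_{j,l-1}y_{i+j,l-1}=0$ for all $i\ge 0$ are all zero.
   Context: An $\mathbb{F}_2$-linear generator: a $p\times p$ matrix $\mathbf{A}$ and $w\times p$ matrix $\mathbf{B}$ over $\mathbb{F}_2$, states $\mathbf{x}_i=\mathbf{A}\mathbf{x}_{i-1}$, outputs $\mathbf{y}_i=\mathbf{B}\mathbf{x}_i={}^t(y_{i,0},\dots,y_{i,w-1})$, and $u_i=\sum_{l=1}^w y_{i,l-1}2^{-l}\in[0,1)$; $P(z)=\det(\mathbf{I}z-\mathbf{A})$. Fix $1\le v\le w$. For $k\ge1$, let $\Psi_k$ be the multiset $\{(u_0,\dots,u_{k-1}) : \mathbf{x}_0\in\mathbb{F}_2^p\}$. Dividing $[0,1)$ into $2^v$ equal intervals partitions $[0,1)^k$ into $2^{kv}$ equal cubic cells; the generator is $k$-dimensionally equidistributed with $v$-bit accuracy if each cell contains exactly $2^{p-kv}$ points of $\Psi_k$, and $k(v)$ is the largest such $k$. Also $G_{l-1}(z):=\sum_{i\ge0}y_{i,l-1}z^{-i-1}=h_{l-1}(z)/P(z)$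 with $h_{l-1}\in\mathbb{F}_2[z]$ for the given nonzero $\mathbf{x}_0$. *)

From HB Require Import structures.
From mathcomp Require Import all_boot all_order all_algebra.
Set Implicit Arguments. Unset Strict Implicit. Unset Printing Implicit Defensive.
Import Order.TTheory GRing.Theory Num.Theory.
Local Open Scope ring_scope.

Definition ybit (p w : nat) (A : 'M['F_2]_p) (B : 'M['F_2]_(w, p))
  (x0 : 'cV['F_2]_p) (i : nat) (l : 'I_w) : 'F_2 :=
  (B *m (A ^+ i *m x0)) l 0.

(* output bit y_{i,l} with a nat index l (0 if l >= w) *)
Definition y (p w : nat) (A : 'M['F_2]_p) (B : 'M['F_2]_(w, p))
  (x0 : 'cV['F_2]_p) (i l : nat) : 'F_2 :=
  if insub l is Some l' then ybit A B x0 i l' else 0.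

Definition u (p w : nat) (A : 'M['F_2]_p) (B : 'M['F_2]_(w, p))
  (x0 : 'cV['F_2]_p) (i : nat) : rat :=
  \sum_(l < w) (((ybit A B x0 i l != 0) : nat)%:R / 2%:R ^+ l.+1).

(* k-dimensional equidistribution with v-bit accuracy: every cubic cell
   prod_i [a_i/2^v, (a_i+1)/2^v) contains exactly 2^(p-kv) points of the
   multiset Psi_k (counting over all x0 in F_2^p); written multiplicatively
   as  count * 2^(kv) = 2^p  to avoid negative exponents. *)
Definition equidist (p w : nat) (A : 'M['F_2]_p) (B : 'M['F_2]_(w, p))
  (v k : nat) : Prop :=
  forall a : 'I_k -> 'I_(2 ^ v),
    (#|[set x0 : 'cV['F_2]_p | [forall i : 'I_k,
         (((a i)%:R / 2%:R ^+ v <= u A B x0 i)%R) &&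
         ((u A B x0 i < (a i).+1%:R / 2%:R ^+ v)%R)]]| * 2 ^ (k * v)
     = 2 ^ p)%N.

Definition is_kv (p w : nat) (A : 'M['F_2]_p) (B : 'M['F_2]_(w, p))
  (v kv : nat) : Prop :=
  equidist A B v kv /\ forall k, equidist A B v k -> (k <= kv)%N.

Definition primitive_poly (P : {poly 'F_2}) : Prop :=
  let d := (size P).-1 in
  [/\ irreducible_poly P,
      P %| 'X^(2 ^ d - 1) - 1
    & forall n, (0 < n < 2 ^ d - 1)%N -> ~~ (P %| 'X^n - 1)].

(* h_l(z) := P(z) G_l(z) where G_l(z) = sum_{i>=0} y_{i,l} z^{-i-1};
   its polynomial part is sum_{t<p} z^t sum_{t<m<=p} P_m y_{m-t-1,l}
   (the part with negative exponents vanishes by Cayley-Hamilton). *)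
Definition hpoly (p w : nat) (A : 'M['F_2]_p) (B : 'M['F_2]_(w, p))
  (x0 : 'cV['F_2]_p) (l : nat) : {poly 'F_2} :=
  \poly_(t < p) \sum_(m < p.+1 | (t < m)%N)
      ((char_poly A)`_m * y A B x0 (m - t - 1) l).

From HB Require Import structures.
From mathcomp Require Import all_boot all_order all_algebra.
From mathcomp Require Import ring lra zify.
Set Implicit Arguments. Unset Strict Implicit. Unset Printing Implicit Defensive.
Import Order.TTheory GRing.Theory Num.Theory.
Local Open Scope ring_scope.

(* The cell of [0,1)^k containing (u_0, ..., u_(k-1)) is determined by the top
   v bits of y_0, ..., y_(k-1), so k-dimensional equidistribution with v-bit
   accuracy says exactly that the F_2-linear map x0 |-> (y_(j,l))_(j<k, l<v) is
   onto, i.e. that the k v row vectors B_l A^j are linearly independent.  A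
   linear relation among the outputs holding along the orbit of x0 is a row
   vector orthogonal to every A^i x0; as char_poly A is irreducible, x0 is a
   cyclic vector, so that row vector is 0 and the relation holds for every
   initial state.  Hence relations of length k + 1 <= k(v) are trivial, while
   the k(v) + 1 rows of length k(v) + 1 are dependent since equidistribution
   fails in dimension k(v) + 1. *)

Definition binval (v : nat) (d : 'I_v -> bool) : nat :=
  (\sum_(l < v) d l * 2 ^ (v - l.+1))%N.

Lemma binvalS v (d : 'I_v.+1 -> bool) :
  binval d = (d ord0 * 2 ^ v + binval (fun l => d (lift ord0 l)))%N.
Proof. by rewrite /binval big_ord_recl subn1. Qed.

Lemma binval_lt v (d : 'I_v -> bool) : (binval d < 2 ^ v)%N.
Proof.
elim: v d => [|v IHv] d; first by rewrite /binval big_ord0.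
rewrite binvalS expnS; have := IHv (fun l => d (lift ord0 l)).
by case: (d ord0) => /=; lia.
Qed.

Lemma binval_inj v (d d' : 'I_v -> bool) : binval d = binval d' -> d =1 d'.
Proof.
elim: v d d' => [|v IHv] d d'; first by move=> _ [].
rewrite !binvalS => E.
have lt_d := binval_lt (fun l => d (lift ord0 l)).
have lt_d' := binval_lt (fun l => d' (lift ord0 l)).
have d0E : d ord0 = d' ord0.
  by move: E lt_d lt_d'; case: (d ord0); case: (d' ord0) => /=; lia.
rewrite d0E in E => i.
by case: (unliftP ord0 i) => [j ->|->] //; apply: IHv (addnI E) j.
Qed.

Lemma eq_binval v (d d' : 'I_v -> bool) : d =1 d' -> binval d = binval d'.
Proof. by move=> eq_d; apply: eq_bigr => l _; rewrite eq_d. Qed.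

Lemma binval_onto v (a : 'I_(2 ^ v)) : exists d : 'I_v -> bool, binval d = a.
Proof.
pose f (d : {ffun 'I_v -> bool}) : 'I_(2 ^ v) := Ordinal (binval_lt d).
have f_inj : injective f.
  by move=> d d' /(congr1 val) /binval_inj eq_dd'; apply/ffunP.
have : a \in codom f.
  by apply: (inj_card_onto f_inj); rewrite card_ffun card_bool !card_ord.
by case/codomP => d /(congr1 val) ->; exists d.
Qed.

Definition dyadic (w : nat) (b : 'I_w -> bool) : rat :=
  \sum_(l < w) (b l : nat)%:R / 2%:R ^+ l.+1.

Lemma sum_inv_pow2 (R : numFieldType) (v w : nat) : (v <= w)%N ->
  \sum_(l < w | (v <= l)%N) (2%:R ^+ l.+1 : R)^-1
  = (2%:R ^+ v)^-1 - (2%:R ^+ w)^-1.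
Proof.
have pow2_neq0 k : (2%:R ^+ k : R) != 0 by rewrite expf_neq0 ?pnatr_eq0.
elim: w => [|w IHw]; first by rewrite leqn0 => /eqP->; rewrite big_ord0 subrr.
rewrite leq_eqVlt => /predU1P[->|].
  by rewrite big_pred0 ?subrr // => l; rewrite leqNgt ltn_ord.
rewrite ltnS => le_vw.
rewrite big_mkcond big_ord_recr /= -big_mkcond IHw // le_vw exprS.
by field; rewrite !pow2_neq0.
Qed.

Section DyadicCell.
Variables (w v : nat) (vw : (v <= w)%N) (b : 'I_w -> bool).

Let prefix (l : 'I_v) := b (widen_ord vw l).

Lemma dyadic_scale : exists2 T : rat, 0 <= T < 1 &
  dyadic b * 2%:R ^+ v = (binval prefix)%:R + T.
Proof.
pose F (l : 'I_w) : rat := (b l : nat)%:R / 2%:R ^+ l.+1.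
have pow2_gt0 k : (0 : rat) < 2%:R ^+ k by rewrite exprn_gt0.
have F_ge0 l : 0 <= F l by rewrite divr_ge0 ?exprn_ge0.
have F_le l : F l <= (2%:R ^+ l.+1)^-1.
  by rewrite ler_pdivrMr // mulVf ?gt_eqF //; case: (b l).
exists ((\sum_(l < w | (v <= l)%N) F l) * 2%:R ^+ v).
  apply/andP; split; first by rewrite mulr_ge0 ?sumr_ge0 ?ltW.
  have tail_le : \sum_(l < w | (v <= l)%N) F l
      <= (2%:R ^+ v)^-1 - (2%:R ^+ w)^-1.
    apply: le_trans (ler_sum _ (fun l _ => F_le l)) _.
    by rewrite sum_inv_pow2.
  apply: (le_lt_trans (ler_wpM2r (ltW (pow2_gt0 v)) tail_le)).
  rewrite mulrBl mulVf ?gt_eqF // gtrBl.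
  by rewrite mulr_gt0 ?invr_gt0.
rewrite /dyadic (bigID (fun l : 'I_w => (v <= l)%N)) /= mulrDl addrC; congr (_ + _).
under eq_bigl do rewrite -ltnNge.
rewrite (big_ord_narrow vw) mulr_suml /binval natr_sum.
apply: eq_bigr => l _; rewrite /F /prefix natrM natrX.
have -> : (2%:R ^+ v : rat) = 2%:R ^+ (v - l.+1) * 2%:R ^+ l.+1.
  by rewrite -exprD subnK.
by field; rewrite gt_eqF.
Qed.

Lemma dyadic_cell (a : nat) :
  (a%:R / 2%:R ^+ v <= dyadic b) && (dyadic b < a.+1%:R / 2%:R ^+ v)
  = (binval prefix == a).
Proof.
have [T /andP[T_ge0 T_lt1] scaleE] := dyadic_scale.
have pow2_gt0 : (0 : rat) < 2%:R ^+ v by rewrite exprn_gt0.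
rewrite ler_pdivrMr // ltr_pdivlMr // scaleE.
apply/andP/eqP => [[lo hi]|<-]; last by split; lra.
have : (binval prefix < a.+1)%N by rewrite -(ltr_nat rat); lra.
have : (a < (binval prefix).+1)%N by rewrite -(ltr_nat rat) -addn1 natrD; lra.
lia.
Qed.
End DyadicCell.

Lemma card_fiber_additive (U V : finZmodType) (f : U -> V) :
  {morph f : x y / x + y} -> (forall t, exists x, f x = t) ->
  forall t, (#|[set x | f x == t]| * #|V| = #|U|)%N.
Proof.
move=> fD f_onto.
have fiber_card t : #|[set x | f x == t]| = #|[set x | f x == 0]|.
  have [xt fxt] := f_onto t.
  have -> : [set x | f x == t] = [set x + xt | x in [set x | f x == 0]].
    apply/setP => x; rewrite inE; apply/eqP/imsetP => [fx|[x' + ->]].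
      exists (x - xt); last by rewrite subrK.
      by rewrite inE; apply/eqP/(addIr (f xt)); rewrite -fD subrK fx fxt add0r.
    by rewrite inE fD fxt => /eqP->; rewrite add0r.
  by rewrite card_imset //; apply: addIr.
have card_U : #|U| = (\sum_(t : V) #|[set x | f x == t]|)%N.
  rewrite -sum1_card (partition_big f predT) //=.
  by apply: eq_bigr => t _; rewrite cardsE -sum1_card.
move=> t; rewrite card_U (eq_bigr _ (fun t _ => fiber_card t)) sum_nat_const.
by rewrite fiber_card mulnC.
Qed.

Section Krylov.
Variables (F : fieldType) (n : nat) (A : 'M[F]_n.+1) (x : 'cV[F]_n.+1).
Hypotheses (A_irr : irreducible_poly (char_poly A)) (x_neq0 : x != 0).

(* A Bezout relation u * char_poly A + v * q = 1 becomes v(A) q(A) = 1 by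
   Cayley-Hamilton. *)
Lemma horner_mx_annihilator_eq0 (q : {poly F}) :
  (size q <= n.+1)%N -> horner_mx A q *m x = 0 -> q = 0.
Proof.
move=> size_q qAx0; apply/eqP; apply: contraTT x_neq0 => q_neq0.
have cop : coprimep (char_poly A) q.
  rewrite irreducible_poly_coprime //; apply: contraTN size_q => /(dvdp_leq q_neq0).
  by rewrite size_char_poly -ltnNge.
have [[u1 u2] /= bezout] := Bezout_eq1_coprimepP _ _ cop.
have : horner_mx A (u1 * char_poly A + u2 * q) = 1 by rewrite bezout rmorph1.
rewrite rmorphD !rmorphM /= Cayley_Hamilton mulr0 add0r => inv_qA.
rewrite negbK; apply/eqP.
transitivity ((horner_mx A u2 * horner_mx A q) *m x); first by rewrite inv_qA mul1mx.
by rewrite -mulmxE -mulmxA qAx0 mulmx0.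
Qed.

Definition krylovmx : 'M[F]_n.+1 := \matrix_(i, j) (A ^+ j *m x) i 0.

Lemma krylovmx_mul (c : 'cV[F]_n.+1) :
  krylovmx *m c = horner_mx A (\poly_(j < n.+1) c (inord j) 0) *m x.
Proof.
rewrite poly_def rmorph_sum /= mulmx_suml; apply/colP => i.
rewrite !mxE summxE; apply: eq_bigr => j _.
by rewrite linearZ /= rmorphXn /= horner_mx_X -scalemxAl inord_val !mxE mulrC.
Qed.

Lemma krylovmx_unit : krylovmx \in unitmx.
Proof.
rewrite -unitmx_tr -row_free_unit -kermx_eq0; apply/eqP/row_matrixP => k.
set c := row k (kermx _).
have cK0 : krylovmx *m c^T = 0.
  by rewrite -[krylovmx]trmxK -trmx_mul -row_mul mulmx_ker row0 trmx0.
clearbody c; rewrite krylovmx_mul in cK0.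
have := horner_mx_annihilator_eq0 (size_poly _ _) cK0.
move/polyP => c0; rewrite row0; apply/rowP => j.
by have := c0 j; rewrite coef_poly ltn_ord inord_val coef0 !mxE.
Qed.

Lemma orbit_orthogonal_eq0 (r : 'rV[F]_n.+1) :
  (forall i, r *m (A ^+ i *m x) = 0) -> r = 0.
Proof.
move=> r_orth; have rK0 : r *m krylovmx = 0.
  apply/rowP => j; have rj := congr1 (fun m : 'M_1 => m 0 0) (r_orth j).
  rewrite /= [RHS]mxE in rj; rewrite [RHS]mxE -[RHS]rj.
  by rewrite !mxE; apply: eq_bigr => i _; rewrite mxE.
by rewrite -[r](mulmxK krylovmx_unit) rK0 mul0mx.
Qed.
End Krylov.

Lemma row_free_mulmx_onto (F : fieldType) (m p : nat) (M : 'M[F]_(m, p)) :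
  row_free M -> forall t : 'cV_m, exists x, M *m x = t.
Proof.
move=> M_free t; have : row_full M^T by rewrite /row_full mxrank_tr.
case/row_fullP => N NMT1; exists (N^T *m t).
by rewrite mulmxA -[M]trmxK -trmx_mul NMT1 trmx1 mul1mx.
Qed.

Lemma rows_dependent_or_coord_onto (F : fieldType) (I : finType) (p : nat)
    (R : I -> 'rV[F]_p) :
  (exists W : I -> F, (exists i, W i != 0) /\ \sum_i W i *: R i = 0) \/
  (forall t : I -> F, exists x : 'cV_p, forall i, (R i *m x) 0 0 = t i).
Proof.
pose M := \matrix_(k < #|I|) R (enum_val k).
have rowM k : row k M = R (enum_val k) by rewrite rowK.
have [M_free|M_dep] := boolP (row_free M).
  right => t; have [x Mx] := row_free_mulmx_onto M_free (\col_k t (enum_val k)).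
  exists x => i; rewrite -[i]enum_rankK -rowM -row_mul.
  by rewrite mxE Mx mxE.
left; have /matrix0Pn[k [j kerkj]] : kermx M != 0 by rewrite kermx_eq0.
pose w := row k (kermx M).
exists (fun i => w 0 (enum_rank i)); split.
  by exists (enum_val j); rewrite enum_valK mxE.
have -> : \sum_i w 0 (enum_rank i) *: R i = w *m M.
  rewrite mulmx_sum_row (reindex _ (onW_bij _ (enum_val_bij I))) /=.
  by apply: eq_bigr => k' _; rewrite enum_valK rowM.
by rewrite -row_mul mulmx_ker row0.
Qed.

Lemma F2_eq_neq0 (s t : 'F_2) : (s != 0) = (t != 0) -> s = t.
Proof. by case: s t => -[|[|//]] ? [[|[|//]] ?] //= _; apply/val_inj. Qed.

Lemma y_widen (p w v : nat) (A : 'M['F_2]_p) (B : 'M['F_2]_(w, p))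
    (vw : (v <= w)%N) x i (l : 'I_v) :
  y A B x i l = ybit A B x i (widen_ord vw l).
Proof.
rewrite /y; case: insubP => [l' _ l'E|]; last by rewrite (leq_trans (ltn_ord l) vw).
by congr ybit; apply: val_inj.
Qed.

Section Generator.
Variables (p w v : nat) (A : 'M['F_2]_p) (B : 'M['F_2]_(w, p)).
Hypothesis vw : (v <= w)%N.

Definition outrow (i : nat) (l : 'I_v) : 'rV['F_2]_p :=
  row (widen_ord vw l) B *m A ^+ i.

Lemma y_outrow x i (l : 'I_v) : y A B x i l = (outrow i l *m x) 0 0.
Proof. by rewrite (y_widen _ _ vw) /ybit /outrow -!row_mul mulmxA [RHS]mxE. Qed.

Definition outmx (K : nat) (x : 'cV['F_2]_p) : 'M['F_2]_(K, v) :=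
  \matrix_(j, l) y A B x j l.

Lemma outmxD K : {morph outmx K : x x' / x + x'}.
Proof. by move=> x x'; apply/matrixP => j l; rewrite !mxE !y_outrow mulmxDr mxE. Qed.

Lemma u_cell x i (a : nat) :
  (a%:R / 2%:R ^+ v <= u A B x i) && (u A B x i < a.+1%:R / 2%:R ^+ v)
  = (binval (fun l : 'I_v => y A B x i l != 0) == a).
Proof.
rewrite [u A B x i]/u -/(dyadic _) (dyadic_cell vw).
by congr (_ == a); apply: eq_binval => l; rewrite (y_widen _ _ vw).
Qed.

Lemma cell_fiberE K (a : 'I_K -> 'I_(2 ^ v)) (T : 'M['F_2]_(K, v)) :
  (forall j, binval (fun l => T j l != 0) = a j) ->
  [set x : 'cV['F_2]_p | [forall j : 'I_K,
      (((a j)%:R / 2%:R ^+ v <= u A B x j)%R) &&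
      ((u A B x j < (a j).+1%:R / 2%:R ^+ v)%R)]]
  = [set x | outmx K x == T].
Proof.
move=> binval_T; apply/setP => x; rewrite !inE.
apply/forallP/eqP => [in_cell|xT j]; last first.
  by rewrite u_cell -binval_T -xT; apply/eqP/eq_binval => l; rewrite mxE.
apply/matrixP => j l; have := in_cell j; rewrite u_cell -binval_T mxE.
by move=> /eqP/binval_inj/(_ l); apply: F2_eq_neq0.
Qed.

Lemma equidist_outmx_onto K :
  equidist A B v K <-> forall T : 'M['F_2]_(K, v), exists x, outmx K x = T.
Proof.
split=> [equi T|outmx_onto a].
  pose a j : 'I_(2 ^ v) := Ordinal (binval_lt (fun l => T j l != 0)).
  have := equi a; rewrite (@cell_fiberE _ a T) // => card_fiber.
  have /card_gt0P[x] : (0 < #|[set x | outmx K x == T]|)%N.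
    rewrite lt0n; apply: contra_eqN card_fiber => /eqP->.
    by rewrite mul0n eq_sym expn_eq0.
  by rewrite inE => /eqP; exists x.
have [d binval_d] := fin_all_exists (fun j => binval_onto (a j)).
pose T : 'M['F_2]_(K, v) := \matrix_(j, l) (d j l)%:R.
rewrite (@cell_fiberE _ a T); last first.
  move=> j; rewrite -binval_d; apply: eq_binval => l.
  by rewrite mxE; case: (d j l); rewrite ?oner_neq0 ?eqxx.
have := card_fiber_additive (outmxD K) outmx_onto T.
by rewrite !card_mx !card_Fp // muln1.
Qed.

Definition relrow k (W : 'I_k.+1 -> 'I_v -> 'F_2) : 'rV['F_2]_p :=
  \sum_(l < v) \sum_(j < k.+1) W j l *: outrow j l.

Lemma relation_mulmx k (W : 'I_k.+1 -> 'I_v -> 'F_2) x i :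
  \sum_(l < v) \sum_(j < k.+1) W j l * y A B x (i + j) l
  = (relrow W *m (A ^+ i *m x)) 0 0.
Proof.
rewrite /relrow mulmx_suml summxE; apply: eq_bigr => l _.
rewrite mulmx_suml summxE; apply: eq_bigr => j _.
by rewrite -scalemxAl mxE y_outrow /outrow addnC exprD -mulmxE !mulmxA.
Qed.

Lemma onto_relation_eq0 k K (W : 'I_k.+1 -> 'I_v -> 'F_2) :
  (k < K)%N -> (forall T : 'M['F_2]_(K, v), exists x, outmx K x = T) ->
  relrow W = 0 -> forall j l, W j l = 0.
Proof.
move=> lt_kK outmx_onto W0 j0 l0.
have [x xE] := outmx_onto (delta_mx (widen_ord lt_kK j0) l0).
have yxE (j : 'I_k.+1) (l : 'I_v) : y A B x j l = ((j == j0) && (l == l0))%:R.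
  have := congr1 (fun T : 'M_(K, v) => T (widen_ord lt_kK j) l) xE.
  by rewrite !mxE => yE; exact: yE.
have := relation_mulmx W x 0; rewrite W0 mul0mx mxE => <-.
rewrite (bigD1 l0) //= [X in _ + X]big1 => [|l l_neq]; last first.
  by rewrite big1 // => j _; rewrite yxE (negbTE l_neq) andbF mulr0.
rewrite (bigD1 j0) //= big1 => [|j j_neq]; last by rewrite yxE (negbTE j_neq) mulr0.
by rewrite yxE !eqxx mulr1 !addr0.
Qed.

Lemma relation_of_not_equidist k :
  ~ equidist A B v k.+1 ->
  exists W : 'I_k.+1 -> 'I_v -> 'F_2, (exists j l, W j l != 0) /\ relrow W = 0.
Proof.
move=> not_equi.
have [[W [[[j0 l0] W_neq0] W_dep]] | outrow_onto] :=
  rows_dependent_or_coord_onto (fun jl : 'I_k.+1 * 'I_v => outrow jl.1 jl.2).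
  exists (fun j l => W (j, l)); split; first by exists j0, l0.
  by rewrite -W_dep /relrow exchange_big pair_big; apply: eq_bigr => -[j l].
case: not_equi; apply/equidist_outmx_onto => T.
have [x xE] := outrow_onto (fun jl => T jl.1 jl.2).
by exists x; apply/matrixP => j l; rewrite mxE y_outrow (xE (j, l)).
Qed.

End Generator.

Theorem mainTheorem2 (p w v kv : nat) (A : 'M['F_2]_p) (B : 'M['F_2]_(w, p))
  (x0 : 'cV['F_2]_p) :
  (1 <= v)%N -> (v <= w)%N ->
  is_kv A B v kv ->
  primitive_poly (char_poly A) ->
  x0 != 0 ->
  hpoly A B x0 0 != 0 ->
  (exists W : 'I_kv.+1 -> 'I_v -> 'F_2,
      (exists j l, W j l != 0) /\
      forall i : nat,
        \sum_(l < v) \sum_(j < kv.+1) W j l * y A B x0 (i + j) l = 0)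
  /\
  (forall k : nat, (k < kv)%N ->
     forall W : 'I_k.+1 -> 'I_v -> 'F_2,
       (forall i : nat,
          \sum_(l < v) \sum_(j < k.+1) W j l * y A B x0 (i + j) l = 0) ->
       forall j l, W j l = 0).
Proof.
move=> _ vw [equi_kv kv_max] [A_irr _ _] x0_neq0 _.
case: p A B x0 equi_kv kv_max A_irr x0_neq0 => [|n] A B x0 equi_kv kv_max A_irr x0_neq0.
  by move: x0_neq0; rewrite flatmx0 eqxx.
split.
  have not_equi : ~ equidist A B v kv.+1 by move/kv_max; rewrite ltnn.
  have [W [W_neq0 W0]] := relation_of_not_equidist vw not_equi.
  by exists W; split=> // i; rewrite relation_mulmx W0 mul0mx mxE.
move=> k lt_k_kv W W_rel.
apply: (onto_relation_eq0 (A := A) (B := B) (vw := vw) lt_k_kv).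
  exact/(equidist_outmx_onto A B vw).
apply: (orbit_orthogonal_eq0 A_irr x0_neq0) => i.
by apply/matrixP => a b; rewrite !ord1 [RHS]mxE -relation_mulmx W_rel.
Qed.
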